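(* Let $\widetilde{\bm{A}}\in\mathbb{C}^{N\times N}$, let $\widetilde{\bm{c}}\in\mathbb{C}^{N}$ be nonzero, and let $h_i\in\mathbb{R}_{>0}$. Let $\bm{V}_{m+1}=[\bm{v}_1,\dots,\bm{v}_{m+1}]$, $\bm{H}_m$, $\bm{K}_m$ and $h_{m+1,m}$ come from a rational Arnoldi decomposition of $\widetilde{\bm{A}}$ with starting vector $\widetilde{\bm{c}}$ (as described in the context), in which the pole of the final iteration is $\xi_{m-1}=\infty$, so that $\bm{K}_m$ is invertible and the rational Krylov relation $$\widetilde{\bm{A}}\bm{V}_m = \bm{V}_m \bm{H}_m \bm{K}_m^{-1} + h_{m+1,m}\, \bm{v}_{m+1} \bm{e}_m^\ast \bm{K}_m^{-1}$$ holds. Then the error of the rational Krylov approximation $\|\widetilde{\bm{c}}\|_2 \bm{V}_m e^{h_i \bm{H}_m\bm{K}_m^{-1}} \bm{e}_1$ to $e^{h_i \widetilde{\bm{A}}}\widetilde{\bm{c}}$ is given by $$e^{h_i \widetilde{\bm{A}}}\widetilde{\bm{c}} - \|\widetilde{\bm{c}}\|_2 \bm{V}_m e^{h_i \bm{H}_m\bm{K}_m^{-1}} \bm{e}_1 = h_i \|\widetilde{\bm{c}}\|_2\, h_{m+1,m} \sum_{k=1}^\infty \left(\bm{e}_m^\ast \bm{K}_m^{-1} \varphi_k(h_i \bm{H}_m\bm{K}_m^{-1}) \bm{e}_1\right) (h_i \widetilde{\bm{A}})^{k-1} \bm{v}_{m+1}.$$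
   Context: The $\varphi$-functions are defined by $\varphi_0(z)=e^z$ and $\varphi_{k}(z)=\sum_{j=0}^\infty \frac{z^j}{(j+k)!}$ for $k\ge 1$; equivalently $\varphi_{k+1}(z)=\frac{\varphi_k(z)-\varphi_k(0)}{z}$ with $\varphi_k(0)=1/k!$; they are applied to square matrices via their power series. The rational Krylov subspace of size $m$ with poles $\xi_1,\dots,\xi_{m-1}\in\mathbb{C}\cup\{\infty\}$ (none equal to an eigenvalue of $\widetilde{\bm{A}}$) is $\mathcal{Q}_m(\widetilde{\bm{A}},\widetilde{\bm{c}})=q_{m-1}(\widetilde{\bm{A}})^{-1}\mathrm{span}\{\widetilde{\bm{c}},\widetilde{\bm{A}}\widetilde{\bm{c}},\dots,\widetilde{\bm{A}}^{m-1}\widetilde{\bm{c}}\}$ with $q_{m-1}(z)=\prod_{j=1}^{m-1}(1-z/\xi_j)$ (factors with $\xi_j=\infty$ are $1$). The rational Arnoldi algorithm produces orthonormal vectors $\bm{v}_1=\widetilde{\bm{c}}/\|\widetilde{\bm{c}}\|_2,\bm{v}_2,\dots,\bm{v}_{m+1}$ (so $\bm{V}_m=[\bm{v}_1,\dots,\bm{v}_m]$ is an orthonormal basis of $\mathcal{Q}_m$ and $\bm{V}_m\bm{e}_1=\widetilde{\bm{c}}/\|\widetilde{\bm{c}}\|_2$) satisfying $\widetilde{\bm{A}}\bm{V}_{m+1}\underline{\bm{K}_m}=\bm{V}_{m+1}\underline{\bm{H}_m}$, where $\underline{\bm{H}_m}=\begin{pmatrix}\bm{H}_m\\ h_{m+1,m}\bm{e}_m^\ast\end{pmatrix}$,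 $\underline{\bm{K}_m}=\begin{pmatrix}\bm{I}_m+\bm{H}_m\bm{D}_m\\ h_{m+1,m}\xi_m^{-1}\bm{e}_m^\ast\end{pmatrix}$, $\bm{D}_m=\mathrm{diag}(\xi_1^{-1},\dots,\xi_m^{-1})$ (with $\infty^{-1}=0$), $\bm{H}_m,\bm{K}_m=\bm{I}_m+\bm{H}_m\bm{D}_m\in\mathbb{C}^{m\times m}$, $h_{m+1,m}\in\mathbb{C}$, and $\bm{e}_1,\bm{e}_m$ are the first and $m$th unit vectors in $\mathbb{C}^m$. With the final pole infinite this yields the relation stated in the claim. *)

From HB Require Import structures.
From mathcomp Require Import all_boot all_order all_algebra.
From mathcomp Require Import all_classical all_reals all_analysis.
From mathcomp Require Import complex.
Import numFieldNormedType.Exports.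
Set Implicit Arguments. Unset Strict Implicit. Unset Printing Implicit Defensive.
Import Order.TTheory GRing.Theory Num.Theory.
Local Open Scope ring_scope.
Local Open Scope complex_scope.
Local Open Scope classical_set_scope.

Section Defs.
Variable R : realType.
Local Notation C := R[i].

Definition mx_cvg (p q : nat) (u : nat -> 'M[C]_(p, q)) (L : 'M[C]_(p, q)) : Prop :=
  forall i j,
    ((fun n => complex.Re (u n i j)) @ \oo --> complex.Re (L i j)) /\
    ((fun n => complex.Im (u n i j)) @ \oo --> complex.Im (L i j)).

Definition mx_series (p q : nat) (u : nat -> 'M[C]_(p, q)) (L : 'M[C]_(p, q)) : Prop :=
  mx_cvg (fun n => \sum_(k < n) u k) L.

Definition mx_lim (p q : nat) (u : nat -> 'M[C]_(p, q)) : 'M[C]_(p, q) :=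
  \matrix_(i, j) ((lim ((fun n => complex.Re (u n i j)) @ \oo)) +i*
                  (lim ((fun n => complex.Im (u n i j)) @ \oo))).

Definition phi (n : nat) (k : nat) (M : 'M[C]_n) : 'M[C]_n :=
  mx_lim (fun N => \sum_(j < N) ((j + k)`!%:R)^-1 *: M ^+ j).

Definition mexp (n : nat) (M : 'M[C]_n) : 'M[C]_n := phi 0 M.

Definition norm2 (n : nat) (c : 'cV[C]_n) : C :=
  (Num.sqrt (\sum_i (complex.Re (c i 0) ^+ 2 + complex.Im (c i 0) ^+ 2)))%:C.

Definition adjmx (p q : nat) (M : 'M[C]_(p, q)) : 'M[C]_(q, p) := (map_mx conjc M)^T.

(* poles are encoded through their inverses: pinv j = xi_(j+1)^-1, with
   xi = infinity encoded by pinv j = 0. *)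
Definition qmx (N : nat) (A : 'M[C]_N) (pinv : nat -> C) (k : nat) : 'M[C]_N :=
  \prod_(j < k) (1%:M - pinv j *: A).

(* a matrix whose ROWS are q_(k-1)(A)^-1 A^i c, i < k; its row space is the
   rational Krylov space Q_k(A, c) *)
Definition krylov_rat (N : nat) (A : 'M[C]_N) (c : 'cV[C]_N) (pinv : nat -> C)
    (k : nat) : 'M[C]_(k, N) :=
  \matrix_(i < k, l < N) (invmx (qmx A pinv k.-1) *m (A ^+ i *m c)) l 0.

End Defs.

(* With X = tA and Y = tB, the Krylov relation A V = V B + v w and the recursion
   phi_k = I/k! + X phi_(k+1) give, for the defect D_k := phi_k(X) V - V phi_k(Y),
     D_k = X D_(k+1) + v (t w phi_(k+1)(Y)).
   Unrolling it n times, D_0 e is the n-th partial sum of the error series plus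
   X^n D_n e, and |X^n D_n| <= M |X|^n / n! -> 0.  The rational Arnoldi
   decomposition with final pole infinite is such a relation, with B = H K^-1 and
   w = h e_m^* K^-1, and c = |c| V_m e_1 turns |c| D_0 e_1 into the stated error. *)

From HB Require Import structures.
From mathcomp Require Import all_boot all_order all_algebra.
From mathcomp Require Import all_classical all_reals all_analysis.
From mathcomp Require Import complex.
From mathcomp Require Import ring lra.
Import numFieldNormedType.Exports.
Set Implicit Arguments. Unset Strict Implicit. Unset Printing Implicit Defensive.
Import Order.TTheory GRing.Theory Num.Theory.
Local Open Scope ring_scope.
Local Open Scope complex_scope.
Local Open Scope classical_set_scope.

Section RealSequences.
Variable R : realType.

Lemma squeeze_cvgr0 (f g : nat -> R) :
  (forall n, 0 <= f n <= g n) -> g @ \oo --> 0 -> f @ \oo --> 0.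
Proof.
move=> fg g0; apply: (@squeeze_cvgr _ _ _ _ (fun=> 0) g) => //; last exact: cvg_cst.
exact: nearW.
Qed.

Lemma cvgMl0 (k : R) (f : nat -> R) :
  f @ \oo --> 0 -> (fun n => k * f n) @ \oo --> 0.
Proof. by move=> f0; rewrite -(mulr0 k); apply: cvgMl_tmp. Qed.

Lemma cvg_sum0 (I : finType) (f : I -> nat -> R) :
  (forall i, f i @ \oo --> 0) -> (fun n => \sum_i f i n) @ \oo --> 0.
Proof.
move=> f0; have := cvg_big (x0 := 0) (P := xpredT) add_continuous
  (r := index_enum I) (Fa := fun=> 0) _ (fun i _ => f0 i).
by rewrite big1 // => /(_ _); apply.
Qed.

End RealSequences.

Section EntrywiseNorm.
Variable R : realType.
Local Notation C := R[i].

Lemma ReB (a b : C) : complex.Re (a - b) = complex.Re a - complex.Re b.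
Proof. exact: (raddfB (@complex.Re R : Rcomplex R -> R)). Qed.

Lemma ImB (a b : C) : complex.Im (a - b) = complex.Im a - complex.Im b.
Proof. exact: (raddfB (@complex.Im R : Rcomplex R -> R)). Qed.

(* Using |Re z| + |Im z| rather than the modulus keeps all norms R-valued and
   makes the entrywise Re/Im convergence [mx_cvg] equivalent to convergence in
   [mxnorm1] (lemma [mx_cvgP]). *)
Definition normc1 (z : C) : R := `|complex.Re z| + `|complex.Im z|.

Lemma normc10 : normc1 0 = 0.
Proof. by rewrite /normc1 /= normr0 addr0. Qed.

Lemma normc1_ge0 z : 0 <= normc1 z.
Proof. by rewrite addr_ge0. Qed.

Lemma normc1D a b : normc1 (a + b) <= normc1 a + normc1 b.
Proof.
case: a b => a1 a2 [b1 b2]; rewrite /normc1 /= addrACA.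
by apply: lerD; apply: ler_normD.
Qed.

Lemma normc1N z : normc1 (- z) = normc1 z.
Proof. by case: z => a b; rewrite /normc1 /= !normrN. Qed.

Lemma normc1M a b : normc1 (a * b) <= normc1 a * normc1 b.
Proof.
case: a b => a1 a2 [b1 b2]; rewrite /normc1 /= mulrDr !mulrDl -!normrM.
have := ler_normB (a1 * b1) (a2 * b2); have := ler_normD (a1 * b2) (a2 * b1).
lra.
Qed.

Lemma normc1_eq0 z : normc1 z = 0 -> z = 0.
Proof.
case: z => a b /eqP; rewrite /normc1 /= paddr_eq0 // !normr_eq0.
by case/andP=> /eqP-> /eqP->.
Qed.

Lemma normc1_Re z : `|complex.Re z| <= normc1 z.
Proof. by rewrite lerDl. Qed.

Lemma normc1_Im z : `|complex.Im z| <= normc1 z.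
Proof. by rewrite lerDr. Qed.

Lemma normc1_natV n : normc1 (n%:R^-1) = n%:R^-1.
Proof.
rewrite -(rmorph_nat (real_complex R)) -fmorphV /normc1 /= normr0 addr0.
by rewrite ger0_norm // invr_ge0.
Qed.

Lemma normc1_sum (I : finType) (f : I -> C) :
  normc1 (\sum_i f i) <= \sum_i normc1 (f i).
Proof.
elim/big_rec2: _ => [|i y1 y2 _ IH]; first by rewrite normc10.
by apply: le_trans (normc1D _ _) _; rewrite lerD2l.
Qed.

Definition mxnorm1 p q (M : 'M[C]_(p, q)) : R := \sum_i \sum_j normc1 (M i j).

Lemma mxnorm1_ge0 p q (M : 'M[C]_(p, q)) : 0 <= mxnorm1 M.
Proof. by do 2![apply: sumr_ge0 => ? _]; exact: normc1_ge0. Qed.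

Lemma mxnorm1_entry p q (M : 'M[C]_(p, q)) i j : normc1 (M i j) <= mxnorm1 M.
Proof.
rewrite /mxnorm1 (bigD1 i) //= (bigD1 j) //= -addrA lerDl addr_ge0 //.
  by apply: sumr_ge0 => *; exact: normc1_ge0.
by do 2![apply: sumr_ge0 => ? _]; exact: normc1_ge0.
Qed.

Lemma mxnorm1_eq0 p q (M : 'M[C]_(p, q)) : mxnorm1 M = 0 -> M = 0.
Proof.
move=> M0; apply/matrixP => i j; rewrite mxE; apply: normc1_eq0.
by apply/le_anti; rewrite normc1_ge0 -M0 mxnorm1_entry.
Qed.

Lemma mxnorm1D p q (M N : 'M[C]_(p, q)) : mxnorm1 (M + N) <= mxnorm1 M + mxnorm1 N.
Proof.
rewrite /mxnorm1 -big_split; apply: ler_sum => i _.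
rewrite -big_split; apply: ler_sum => j _; rewrite mxE; exact: normc1D.
Qed.

Lemma mxnorm1N p q (M : 'M[C]_(p, q)) : mxnorm1 (- M) = mxnorm1 M.
Proof. by apply: eq_bigr => i _; apply: eq_bigr => j _; rewrite mxE normc1N. Qed.

Lemma mxnorm1B p q (M N : 'M[C]_(p, q)) : mxnorm1 (M - N) <= mxnorm1 M + mxnorm1 N.
Proof. by rewrite -(mxnorm1N N); exact: mxnorm1D. Qed.

Lemma mxnorm1Z p q a (M : 'M[C]_(p, q)) : mxnorm1 (a *: M) <= normc1 a * mxnorm1 M.
Proof.
rewrite /mxnorm1 mulr_sumr; apply: ler_sum => i _.
rewrite mulr_sumr; apply: ler_sum => j _; rewrite mxE; exact: normc1M.
Qed.

Lemma mxnorm1M p q r (M : 'M[C]_(p, q)) (N : 'M[C]_(q, r)) :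
  mxnorm1 (M *m N) <= mxnorm1 M * mxnorm1 N.
Proof.
rewrite /mxnorm1 mulr_suml; apply: ler_sum => i _.
apply: (@le_trans _ _ (\sum_j \sum_k normc1 (M i k) * normc1 (N k j))).
  apply: ler_sum => j _; rewrite mxE; apply: le_trans (normc1_sum _) _.
  by apply: ler_sum => k _; exact: normc1M.
rewrite exchange_big mulr_suml; apply: ler_sum => k _; rewrite -mulr_sumr.
rewrite ler_wpM2l ?normc1_ge0 // /mxnorm1 (bigD1 k) //= lerDl.
by do 2![apply: sumr_ge0 => ? _]; exact: normc1_ge0.
Qed.

Lemma mxnorm1_sum p q (I : finType) (F : I -> 'M[C]_(p, q)) :
  mxnorm1 (\sum_i F i) <= \sum_i mxnorm1 (F i).
Proof.
elim/big_rec2: _ => [|i y1 y2 _ IH]; last first.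
  by apply: le_trans (mxnorm1D _ _) _; rewrite lerD2l.
by rewrite /mxnorm1 big1 // => i _; rewrite big1 // => j _; rewrite mxE normc10.
Qed.

Lemma mxnorm1X n (X : 'M[C]_n) k :
  mxnorm1 (X ^+ k) <= mxnorm1 (1%:M : 'M[C]_n) * mxnorm1 X ^+ k.
Proof.
elim: k => [|k IH]; first by rewrite !expr0 mulr1.
rewrite !exprSr mulrA; apply: le_trans (mxnorm1M _ _) _.
by rewrite ler_wpM2r ?mxnorm1_ge0.
Qed.

End EntrywiseNorm.

Section NormConvergence.
Variable R : realType.
Local Notation C := R[i].

Definition mxnorm_cvg p q (u : nat -> 'M[C]_(p, q)) (L : 'M[C]_(p, q)) : Prop :=
  (fun n => mxnorm1 (u n - L)) @ \oo --> (0 : R).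

Lemma mx_cvgP p q (u : nat -> 'M[C]_(p, q)) L : mx_cvg u L <-> mxnorm_cvg u L.
Proof.
split=> [uL | uL i j].
  apply: cvg_sum0 => i; apply: cvg_sum0 => j; have [Re_cvg Im_cvg] := uL i j.
  have Re0 : `|complex.Re (u n i j) - complex.Re (L i j)| @[n --> \oo] --> 0.
    exact/norm_cvg0P/subr_cvg0.
  have Im0 : `|complex.Im (u n i j) - complex.Im (L i j)| @[n --> \oo] --> 0.
    exact/norm_cvg0P/subr_cvg0.
  under eq_cvg do rewrite !mxE /normc1 ReB ImB.
  by have /(_ _) := cvgD Re0 Im0; rewrite addr0.
split; apply/subr_cvg0/norm_cvg0P; apply: squeeze_cvgr0 uL => n;
  rewrite normr_ge0 (le_trans _ (mxnorm1_entry _ i j)) // !mxE.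
- by rewrite -ReB normc1_Re.
- by rewrite -ImB normc1_Im.
Qed.

Section Properties.
Variables (p q : nat).
Implicit Types (u : nat -> 'M[C]_(p, q)) (L : 'M[C]_(p, q)).

Lemma eq_mxnorm_cvg u1 u2 L : u1 =1 u2 -> mxnorm_cvg u1 L -> mxnorm_cvg u2 L.
Proof. by move=> /funext->. Qed.

Lemma mxnorm_cvg_shift u L : mxnorm_cvg u L -> mxnorm_cvg (fun n => u n.+1) L.
Proof. by rewrite /mxnorm_cvg -(cvg_shiftS (fun n => mxnorm1 (u n - L))). Qed.

Lemma mxnorm_cvgZ u L a : mxnorm_cvg u L -> mxnorm_cvg (fun n => a *: u n) (a *: L).
Proof.
move=> uL; apply: squeeze_cvgr0 (cvgMl0 (normc1 a) uL) => n.
by rewrite mxnorm1_ge0 -scalerBr mxnorm1Z.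
Qed.

Lemma mxnorm_cvg_affine r (B : 'M[C]_(r, q)) (X : 'M[C]_(r, p)) u L :
  mxnorm_cvg u L -> mxnorm_cvg (fun n => B + X *m u n) (B + X *m L).
Proof.
move=> uL; apply: squeeze_cvgr0 (cvgMl0 (mxnorm1 X) uL) => n.
by rewrite mxnorm1_ge0 opprD addrACA subrr add0r -mulmxN -mulmxDr mxnorm1M.
Qed.

Lemma mxnorm_cvg_le u L b : mxnorm_cvg u L -> (forall n, mxnorm1 (u n) <= b) ->
  mxnorm1 L <= b.
Proof.
move=> uL ub; rewrite -subr_le0; apply: (ler_cvg_to (cvg_cst _) uL); apply: nearW => n.
rewrite lerBlDl -{1}(subKr (u n) L); apply: le_trans (mxnorm1B _ _) _.
by rewrite lerD2r.
Qed.

Lemma mxnorm_cvg_unique u L1 L2 : mxnorm_cvg u L1 -> mxnorm_cvg u L2 -> L1 = L2.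
Proof.
move=> uL1 uL2.
have uL12 : (fun n => mxnorm1 (u n - L1) + mxnorm1 (u n - L2)) @ \oo --> (0 : R).
  by have := cvgD uL1 uL2; rewrite addr0; apply.
apply/eqP; rewrite -subr_eq0; apply/eqP/mxnorm1_eq0/le_anti.
rewrite mxnorm1_ge0 andbT; apply: (ler_cvg_to (cvg_cst _) uL12); apply: nearW => n.
have -> : L1 - L2 = (u n - L2) - (u n - L1) by rewrite opprB [RHS]addrC addrA subrK.
by rewrite [leRHS]addrC mxnorm1B.
Qed.

End Properties.
End NormConvergence.

Section PhiFunctions.
Variable R : realType.
Local Notation C := R[i].

Lemma leq_fact_mul j k : (j`! * k`! <= (j + k)`!)%N.
Proof.
elim: j => [|j IH]; first by rewrite fact0 mul1n.
by rewrite addSn !factS -mulnA leq_mul // leq_addr.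
Qed.

Lemma series_exp_coeff_le_expR (x : R) N : 0 <= x -> series (exp_coeff x) N <= expR x.
Proof.
move=> x0; apply: nondecreasing_cvgn_le (is_cvg_series_exp_coeff x) N.
by apply: nondecreasing_series => j _ _; exact: exp_coeff_ge0.
Qed.

Definition phi_partial n k (X : 'M[C]_n) N : 'M[C]_n :=
  \sum_(j < N) ((j + k)`!%:R)^-1 *: X ^+ j.

Variables (n : nat) (X : 'M[C]_n).
Local Notation c1 := (mxnorm1 (1%:M : 'M[C]_n)).

Lemma phi_partialS k N :
  phi_partial k X N.+1 = ((k`!%:R)^-1)%:M + X *m phi_partial k.+1 X N.
Proof.
rewrite /phi_partial big_ord_recl /= add0n expr0 scalemx1 mulmx_sumr.
congr (_ + _); apply: eq_bigr => j _.
by rewrite -scalemxAr mulmxE -exprS addSnnS.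
Qed.

Lemma phi_term_le k j : mxnorm1 (((j + k)`!%:R)^-1 *: X ^+ j) <=
  ((k`!%:R)^-1 * c1) * exp_coeff (mxnorm1 X) j.
Proof.
apply: le_trans (mxnorm1Z _ _) _; rewrite normc1_natV /exp_coeff /=.
have -> : (k`!%:R)^-1 * c1 * (mxnorm1 X ^+ j / j`!%:R) =
    ((j`! * k`!)%:R)^-1 * (c1 * mxnorm1 X ^+ j) by rewrite natrM invfM; ring.
apply: ler_pM; rewrite ?invr_ge0 ?ler0n ?mxnorm1_ge0 ?mxnorm1X //.
by rewrite lef_pV2 ?posrE ?ltr0n ?muln_gt0 ?fact_gt0 // ler_nat leq_fact_mul.
Qed.

Lemma phi_partial_le k N :
  mxnorm1 (phi_partial k X N) <= (k`!%:R)^-1 * c1 * expR (mxnorm1 X).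
Proof.
apply: le_trans (mxnorm1_sum _) _.
apply: (@le_trans _ _ (\sum_(j < N) (k`!%:R)^-1 * c1 * exp_coeff (mxnorm1 X) j)).
  by apply: ler_sum => j _; exact: phi_term_le.
rewrite -mulr_sumr ler_wpM2l ?mulr_ge0 ?invr_ge0 ?ler0n ?mxnorm1_ge0 //.
by rewrite -(big_mkord xpredT) series_exp_coeff_le_expR ?mxnorm1_ge0.
Qed.

Lemma phi_partial_cvg k : mxnorm_cvg (phi_partial k X) (phi k X).
Proof.
apply/mx_cvgP => i l.
have part_cvg (g : C -> R) : (forall z, `|g z| <= normc1 z) ->
    {morph g : a b / a + b} -> g 0 = 0 -> cvgn (fun N => g (phi_partial k X N i l)).
  move=> g_le gD g0.
  have -> : (fun N => g (phi_partial k X N i l)) =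
      series (fun j => g ((((j + k)`!%:R)^-1 *: X ^+ j) i l)).
    apply/funext => N; rewrite /phi_partial summxE (big_morph g gD g0).
    by rewrite /series /= big_mkord.
  apply: normed_cvg.
  apply: (series_le_cvg (v_ := ((k`!%:R)^-1 * c1) *: exp_coeff (mxnorm1 X))) => [j|j|j|].
  - by rewrite normr_ge0.
  - by rewrite /= mulr_ge0 ?exp_coeff_ge0 ?mulr_ge0 ?invr_ge0 ?ler0n ?mxnorm1_ge0.
  - apply: le_trans (g_le _) _; apply: le_trans (mxnorm1_entry _ i l) _.
    exact: phi_term_le.
  - exact/is_cvg_seriesZ/is_cvg_series_exp_coeff.
rewrite /phi /mx_lim mxE /=; split.
- exact: (part_cvg _ (@normc1_Re R) (raddfD (@complex.Re R : Rcomplex R -> R)) (raddf0 _)).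
- exact: (part_cvg _ (@normc1_Im R) (raddfD (@complex.Im R : Rcomplex R -> R)) (raddf0 _)).
Qed.

Lemma phi_le k : mxnorm1 (phi k X) <= (k`!%:R)^-1 * c1 * expR (mxnorm1 X).
Proof. exact: mxnorm_cvg_le (phi_partial_cvg k) (phi_partial_le k). Qed.

Lemma phiS k : phi k X = ((k`!%:R)^-1)%:M + X *m phi k.+1 X.
Proof.
apply: mxnorm_cvg_unique (mxnorm_cvg_shift (phi_partial_cvg k)) _.
under [fun N => _]funext do rewrite phi_partialS.
exact: mxnorm_cvg_affine (phi_partial_cvg _).
Qed.

End PhiFunctions.

Lemma col_row_mulmx (T : comNzRingType) p q (u : 'cV[T]_p) (r : 'rV[T]_q) (e : 'cV[T]_q) :
  u *m r *m e = (r *m e) 0 0 *: u.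
Proof. by rewrite -mulmxA {1}(mx11_scalar (r *m e)) mul_mx_scalar. Qed.

Lemma arnoldi_krylov_rel (T : comUnitRingType) N m (A : 'M[T]_N) (Vm : 'M[T]_(N, m))
    (v : 'cV[T]_N) (H K : 'M[T]_m) (g : 'rV[T]_m) :
  K \in unitmx -> A *m row_mx Vm v *m col_mx K 0 = row_mx Vm v *m col_mx H g ->
  A *m Vm = Vm *m (H *m invmx K) + v *m (g *m invmx K).
Proof.
move=> K_unit; rewrite mul_mx_row !mul_row_col mulmx0 addr0 => AVK.
by rewrite -(mulmxK K_unit (A *m Vm)) AVK mulmxDl -!mulmxA.
Qed.

Section KrylovError.
Variable R : realType.
Local Notation C := R[i].
Variables (N m : nat) (A : 'M[C]_N) (V : 'M[C]_(N, m)) (v : 'cV[C]_N).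
Variables (B : 'M[C]_m) (w : 'rV[C]_m) (t : C).
Hypothesis krylov_rel : A *m V = V *m B + v *m w.

Local Notation X := (t *: A).
Local Notation Y := (t *: B).

Local Notation defect_bound := ((mxnorm1 (1%:M : 'M[C]_N) * expR (mxnorm1 X) +
  mxnorm1 (1%:M : 'M[C]_m) * expR (mxnorm1 Y)) * mxnorm1 V).

Definition phi_defect k := phi k X *m V - V *m phi k Y.

Lemma phi_defect_rec k :
  phi_defect k = X *m phi_defect k.+1 + v *m (t *: w *m phi k.+1 Y).
Proof.
have VY : V *m Y = X *m V - v *m (t *: w).
  by rewrite -scalemxAr -scalemxAl krylov_rel scalerDr -scalemxAr addrK.
rewrite /phi_defect (phiS X k) (phiS Y k) mulmxDl [V *m (_ + _)]mulmxDr.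
rewrite mul_scalar_mx mul_mx_scalar [V *m (Y *m _)]mulmxA VY mulmxBl mulmxBr !mulmxA.
by rewrite opprD opprB addrACA subrr add0r addrA addrAC.
Qed.

Lemma phi_defect_expand n : phi_defect 0 =
  \sum_(i < n) X ^+ i *m v *m (t *: w *m phi i.+1 Y) + X ^+ n *m phi_defect n.
Proof.
elim: n => [|n IH]; first by rewrite big_ord0 add0r expr0 mul1mx.
rewrite IH (phi_defect_rec n) mulmxDr big_ord_recr /= exprSr -mulmxE !mulmxA.
by rewrite addrAC addrA.
Qed.

Lemma phi_defect_le n : mxnorm1 (phi_defect n) <= (n`!%:R)^-1 * defect_bound.
Proof.
apply: le_trans (mxnorm1B _ _) _; apply: le_trans (lerD (mxnorm1M _ _) (mxnorm1M _ _)) _.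
rewrite mulrDl mulrDr [mxnorm1 V * _]mulrC !mulrA.
by apply: lerD; rewrite ler_wpM2r ?mxnorm1_ge0 // phi_le.
Qed.

Lemma phi_defect_tail_cvg :
  (fun n => mxnorm1 (X ^+ n *m phi_defect n)) @ \oo --> (0 : R).
Proof.
pose c := mxnorm1 (1%:M : 'M[C]_N) * defect_bound.
apply: squeeze_cvgr0 (cvgMl0 c (cvg_exp_coeff (mxnorm1 X))) => n.
rewrite mxnorm1_ge0 /=; apply: le_trans (mxnorm1M _ _) _.
apply: le_trans (ler_pM (mxnorm1_ge0 _) (mxnorm1_ge0 _) (mxnorm1X _ _) (phi_defect_le n)) _.
by rewrite /c /exp_coeff /= le_eqVlt; apply/orP; left; apply/eqP; ring.
Qed.

Lemma phi_krylov_error (e : 'cV[C]_m) :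
  mxnorm_cvg (fun n => \sum_(k < n) (t * (w *m phi k.+1 Y *m e) 0 0) *: (X ^+ k *m v))
    (phi 0 X *m V *m e - V *m phi 0 Y *m e).
Proof.
have termE k : X ^+ k *m v *m (t *: w *m phi k.+1 Y) *m e =
    (t * (w *m phi k.+1 Y *m e) 0 0) *: (X ^+ k *m v).
  by rewrite col_row_mulmx -!scalemxAl mxE.
have errorE n : \sum_(k < n) (t * (w *m phi k.+1 Y *m e) 0 0) *: (X ^+ k *m v) -
    (phi 0 X *m V *m e - V *m phi 0 Y *m e) = - (X ^+ n *m phi_defect n *m e).
  rewrite -mulmxBl -/(phi_defect 0) (phi_defect_expand n) mulmxDl mulmx_suml.
  under [X in _ - (X + _)]eq_bigr do rewrite termE.
  by rewrite opprD addrA subrr add0r.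
apply: squeeze_cvgr0 (cvgMl0 (mxnorm1 e) phi_defect_tail_cvg) => n.
by rewrite mxnorm1_ge0 errorE mxnorm1N mulrC mxnorm1M.
Qed.

End KrylovError.

Lemma norm2_neq0 (R : realType) n (c : 'cV[R[i]]_n) : c != 0 -> norm2 c != 0.
Proof.
apply: contra => /eqP[/eqP]; rewrite sqrtr_eq0 => S_le0.
have S_ge0 i : 0 <= complex.Re (c i 0) ^+ 2 + complex.Im (c i 0) ^+ 2.
  by rewrite addr_ge0 ?sqr_ge0.
have /psumr_eq0P S0 : \sum_i (complex.Re (c i 0) ^+ 2 + complex.Im (c i 0) ^+ 2) = 0.
  by apply/le_anti; rewrite S_le0 sumr_ge0.
apply/eqP/matrixP => i j; rewrite (ord1 j) mxE.
move: (S0 (fun i _ => S_ge0 i) i isT); case: (c i 0) => a b /= /eqP.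
by rewrite paddr_eq0 ?sqr_ge0 // !sqrf_eq0 => /andP[/eqP-> /eqP->].
Qed.

Unset Implicit Arguments.

Theorem theorem4p3 (R : realType) (N m : nat) (A : 'M[R[i]]_N) (c : 'cV[R[i]]_N)
  (hi : R) (Vm : 'M[R[i]]_(N, m.+1)) (v : 'cV[R[i]]_N) (H : 'M[R[i]]_m.+1)
  (h : R[i]) (pinv : nat -> R[i]) :
  c != 0 ->
  0 < hi ->
  (* poles are not eigenvalues of A *)
  (forall j, (j <= m)%N -> pinv j != 0 -> ~~ eigenvalue A (pinv j)^-1) ->
  (* final pole is infinite *)
  pinv m = 0 ->
  (* rational Arnoldi decomposition *)
  let V := row_mx Vm v in
  let em : 'rV[R[i]]_m.+1 := delta_mx 0 ord_max in
  let e1 : 'cV[R[i]]_m.+1 := delta_mx ord0 0 in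
  let K := 1%:M + H *m diag_mx (\row_(j < m.+1) pinv j) in
  adjmx V *m V = 1%:M ->
  Vm *m e1 = (norm2 c)^-1 *: c ->
  (Vm^T == krylov_rat A c pinv m.+1)%MS ->
  (V^T == krylov_rat A c pinv m.+2)%MS ->
  A *m V *m col_mx K ((h * pinv m) *: em) = V *m col_mx H (h *: em) ->
  K \in unitmx ->
  (* conclusion: the series converges to the error *)
  mx_series
    (fun k => ((hi%:C * norm2 c * h) *
               (em *m invmx K *m phi k.+1 (hi%:C *: (H *m invmx K)) *m e1) 0 0)
              *: ((hi%:C *: A) ^+ k *m v))
    (mexp (hi%:C *: A) *m c - norm2 c *: (Vm *m mexp (hi%:C *: (H *m invmx K)) *m e1)).
Proof.
move=> c_neq0 _ _ pinv_m V em e1 K _ Vm_e1 _ _ arnoldi K_unit.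
have krylov : A *m Vm = Vm *m (H *m invmx K) + v *m ((h *: em) *m invmx K).
  by move: arnoldi; rewrite pinv_m mulr0 scale0r; exact: arnoldi_krylov_rel.
have c_eq : c = norm2 c *: (Vm *m e1).
  by rewrite Vm_e1 scalerA mulfV ?norm2_neq0 // scale1r.
apply/mx_cvgP; rewrite /mexp [X in phi 0 _ *m X]c_eq -scalemxAr mulmxA -scalerBr.
apply: eq_mxnorm_cvg (mxnorm_cvgZ (norm2 c) (phi_krylov_error hi%:C krylov e1)) => n.
rewrite scaler_sumr; apply: eq_bigr => k _.
by rewrite scalerA -!scalemxAl mxE; congr (_ *: _); ring.
Qed.
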